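(* Let $f:A\to B$ be a ring homomorphism, $\mathfrak b$ an ideal of $B$, and $A\bowtie^f\mathfrak b:=\{(a,f(a)+b): a\in A,\ b\in\mathfrak b\}\subseteq A\times B$. Assume $A\bowtie^f\mathfrak b$ is a Prüfer ring. Then: (1) if $\{0\}\times\mathfrak b$ is a regular ideal of $A\bowtie^f\mathfrak b$, then $A$ is a Prüfer ring; (2) if $f^{-1}(\mathfrak b)\times\{0\}$ is a regular ideal of $A\bowtie^f\mathfrak b$, then the subring $f(A)+\mathfrak b$ of $B$ is a Prüfer ring.
   Context: All rings are commutative with identity. An ideal is regular if it contains a non-zerodivisor. A ring is a Prüfer ring if every regular finitely generated ideal is invertible. Note $\{0\}\times\mathfrak b$ and $f^{-1}(\mathfrak b)\times\{0\}$ are ideals of $A\bowtie^f\mathfrak b$. *)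

From HB Require Import structures.
From mathcomp Require Import all_boot all_order all_algebra.
Set Implicit Arguments. Unset Strict Implicit. Unset Printing Implicit Defensive.
Import GRing.Theory.
Local Open Scope ring_scope.

(* Subrings of a commutative ring R are represented by Prop-valued predicates
   S : R -> Prop; every notion below (ideal, regular element, ...) is taken
   relative to the ring S (whose operations are those of R). *)

Section Rel.
Variable R : comPzRingType.
Implicit Types (S I : R -> Prop).

Definition full_pred : R -> Prop := fun _ => True.

Definition ideal_in S I : Prop :=
  [/\ forall x, I x -> S x,
      I 0,
      forall x y, I x -> I y -> I (x + y)
    & forall r x, S r -> I x -> I (r * x)].

Definition regular_in S (x : R) : Prop :=
  S x /\ forall y, S y -> x * y = 0 -> y = 0.

Definition regular_ideal_in S I : Prop :=
  exists x, I x /\ regular_in S x.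

Definition fin_gen_in S I : Prop :=
  exists g : seq R, forall x, I x <->
    exists c : 'I_(size g) -> R,
      (forall i, S (c i)) /\ x = \sum_(i < size g) c i * g`_i.

(* I is invertible: there are u_1..u_n in the total ring of fractions T(S)
   with u_i I ⊆ S and sum x_i u_i = 1 for some x_i in I (i.e. I J = S for
   the fractional ideal J generated by the u_i).  Elements of T(S) are
   written with a common regular denominator s: u_i = a_i / s; in T(S),
   u_i * y ∈ S iff a_i * y = s * z for some z ∈ S, and sum x_i u_i = 1
   iff sum x_i a_i = s. *)
Definition invertible_in S I : Prop :=
  exists (s : R) (n : nat) (x a : 'I_n -> R),
    [/\ regular_in S s,
        forall i, I (x i),
        forall i, S (a i),
        \sum_(i < n) x i * a i = s
      & forall i y, I y -> exists z, S z /\ a i * y = s * z].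

Definition prufer_in S : Prop :=
  forall I, ideal_in S I -> fin_gen_in S I -> regular_ideal_in S I ->
    invertible_in S I.

End Rel.

Definition prufer (R : comPzRingType) : Prop := prufer_in (@full_pred R).

Definition amalg (A B : comPzRingType) (f : A -> B) (b : B -> Prop)
  : A * B -> Prop := fun p => b (p.2 - f p.1).

Definition img_plus (A B : comPzRingType) (f : A -> B) (b : B -> Prop)
  : B -> Prop := fun y => exists a, b (y - f a).

Definition zero_times (A B : comPzRingType) (b : B -> Prop) : A * B -> Prop :=
  fun p => p.1 = 0 /\ b p.2.

Definition preim_times_zero (A B : comPzRingType) (f : A -> B) (b : B -> Prop)
  : A * B -> Prop := fun p => b (f p.1) /\ p.2 = 0.

From mathcomp Require Import all_boot all_order all_algebra.
Import GRing.Theory.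
Set Implicit Arguments. Unset Strict Implicit. Unset Printing Implicit Defensive.
Local Open Scope ring_scope.

(* Both parts are instances of one transfer principle: if a ring morphism pi
   maps the Prüfer ring S onto S' and kills a regular element r0 of S, then S'
   is Prüfer.  Here pi is the first (resp. second) projection, which kills the
   regular element of {0} × b (resp. f^-1(b) × {0}).  To invert a regular
   finitely generated ideal I' of S', lift its generators and add r0: the
   ideal J they span in S is regular, hence invertible, and J maps onto I'.
   The denominator s of J need not map to a regular element, so it is
   replaced by a lift p of a regular element of I': from a_i p = s z_i and
   regularity of s one gets sum x_i z_i = p and z_i y = w p whenever
   a_i y = s w, so the images of the z_i over pi p invert I'. *)

Definition span_in (R : comPzRingType) (S : R -> Prop) (g : seq R) : R -> Prop :=
  fun x => exists c : 'I_(size g) -> R,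
    (forall i, S (c i)) /\ x = \sum_(i < size g) c i * g`_i.

Section Span.
Variables (R : comPzRingType) (S : R -> Prop).

Lemma span_in_nil x : span_in S [::] x <-> x = 0.
Proof.
split=> [[c [_ ->]]|->]; first by rewrite /= big_ord0.
by exists (fun=> 0); split=> [[] //|]; rewrite /= big_ord0.
Qed.

Lemma span_in_cons x g y :
  span_in S (x :: g) y <-> exists a z, [/\ S a, span_in S g z & y = a * x + z].
Proof.
split=> [[c [Sc ->]]|[a [z [Sa [c [Sc ->]] ->]]]].
  exists (c ord0), (\sum_(i < size g) c (lift ord0 i) * g`_i).
  by split=> //; [exists (fun i => c (lift ord0 i)) | rewrite big_ord_recl].
exists (fun i => if unlift ord0 i is Some j then c j else a); split.
  by move=> i; case: unlift.
rewrite big_ord_recl unlift_none; congr (_ + _).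
by apply: eq_bigr => i _; rewrite liftK.
Qed.

Hypotheses (S0 : S 0) (S1 : S 1).

Lemma span_in0 g : span_in S g 0.
Proof.
exists (fun=> 0); split=> [_|]; first exact: S0.
by rewrite big1 // => i _; rewrite mul0r.
Qed.

Lemma span_in_mem g x : x \in g -> span_in S g x.
Proof.
elim: g => [|y g IH] //; rewrite in_cons => /predU1P [->|/IH gx]; apply/span_in_cons.
  by exists 1, 0; split; [| apply: span_in0 | rewrite mul1r addr0].
by exists 0, x; split; [apply: S0 | | rewrite mul0r add0r].
Qed.

End Span.

Section Subring.
Variables (R : comPzRingType) (S : R -> Prop).
Hypotheses (S1 : S 1) (SB : forall x y, S x -> S y -> S (x - y))
  (SM : forall x y, S x -> S y -> S (x * y)).

Lemma subring_in0 : S 0.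
Proof. by rewrite -(subrr (1 : R)); apply: SB. Qed.

Lemma subring_inD x y : S x -> S y -> S (x + y).
Proof.
move=> Sx Sy; have -> : x + y = x - (0 - y) by rewrite sub0r opprK.
by apply: SB => //; apply: SB => //; apply: subring_in0.
Qed.

Lemma subring_in_sum n (F : 'I_n -> R) : (forall i, S (F i)) -> S (\sum_i F i).
Proof.
move=> SF; apply: (big_ind S) => //; [exact: subring_in0 | exact: subring_inD].
Qed.

Lemma regular_in_cancel s x y :
  regular_in S s -> S x -> S y -> s * x = s * y -> x = y.
Proof.
move=> [_ sreg] Sx Sy e; apply/eqP; rewrite -subr_eq0; apply/eqP.
by apply: sreg; [apply: SB | rewrite mulrBr e subrr].
Qed.

Lemma ideal_in_span g :
  (forall x, x \in g -> S x) -> ideal_in S (span_in S g).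
Proof.
move=> gS; split.
- move=> _ [c [Sc ->]]; apply: subring_in_sum => i.
  by apply: SM => //; apply/gS/mem_nth.
- exact: (span_in0 subring_in0).
- move=> _ _ [c [Sc ->]] [d [Sd ->]]; exists (fun i => c i + d i).
  split=> [i|]; first exact: subring_inD.
  by rewrite -big_split; apply: eq_bigr => i _; rewrite mulrDl.
move=> r _ Sr [c [Sc ->]]; exists (fun i => r * c i); split=> [i|]; first exact: SM.
by rewrite mulr_sumr; apply: eq_bigr => i _; rewrite mulrA.
Qed.

Section Image.
Variables (R' : comPzRingType) (pi : {rmorphism R -> R'}) (S' : R' -> Prop).
Hypotheses (piS : forall x, S x -> S' (pi x))
  (piS_onto : forall y, S' y -> exists x, S x /\ pi x = y).

Lemma span_in_map g y : span_in S g y -> span_in S' (map pi g) (pi y).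
Proof.
elim: g y => [|x g IH] y.
  by move=> /span_in_nil ->; apply/span_in_nil; rewrite rmorph0.
move=> /span_in_cons [a [z [Sa /IH gz ->]]]; apply/span_in_cons.
by exists (pi a), (pi z); rewrite rmorphD rmorphM; split=> //; apply: piS.
Qed.

Lemma span_in_lift g y' :
  span_in S' (map pi g) y' -> exists y, span_in S g y /\ pi y = y'.
Proof.
elim: g y' => [|x g IH] y'.
  by move=> /span_in_nil ->; exists 0; rewrite rmorph0; split=> //; apply/span_in_nil.
move=> /span_in_cons [a' [z' [/piS_onto [a [Sa <-]] /IH [z [gz <-]] ->]]].
exists (a * x + z); split; last by rewrite rmorphD rmorphM.
by apply/span_in_cons; exists a, z.
Qed.

Lemma lift_seq g' :
  (forall y, y \in g' -> S' y) ->
  exists g, (forall x, x \in g -> S x) /\ map pi g = g'.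
Proof.
elim: g' => [|y g' IH] g'S; first by exists [::].
have [x [Sx <-]] := piS_onto (g'S y (mem_head _ _)).
have [g [gS <-]] : exists g, (forall x, x \in g -> S x) /\ map pi g = g'.
  by apply: IH => z gz; apply: g'S; rewrite in_cons gz orbT.
by exists (x :: g); split=> // z; rewrite in_cons => /predU1P [->|/gS].
Qed.

Lemma invertible_in_image (J : R -> Prop) (I' : R' -> Prop) :
  ideal_in S J ->
  (forall q, J q -> I' (pi q)) -> (forall y, I' y -> exists q, J q /\ pi q = y) ->
  regular_ideal_in S' I' -> invertible_in S J -> invertible_in S' I'.
Proof.
move=> [JS _ _ _] piJ J_onto [x' [Ix' x'reg]] [s [n [xs [a [sreg Jxs Sa sxa Ja]]]]].
have [p [Jp px']] := J_onto x' Ix'; subst x'.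
have /fin_all_exists [z Hz] : forall i, exists w, S w /\ a i * p = s * w.
  by move=> i; apply: Ja.
have Sz i : S (z i) by case: (Hz i).
have Sxz : S (\sum_i xs i * z i) by apply: subring_in_sum => i; apply: SM => //; apply: JS.
have sum_xz : \sum_i xs i * z i = p.
  apply: (regular_in_cancel sreg Sxz (JS _ Jp)); rewrite mulr_sumr -[in RHS]sxa mulr_suml.
  by apply: eq_bigr => i _; rewrite mulrCA -(proj2 (Hz i)) mulrA.
exists (pi p), n, (fun i => pi (xs i)), (fun i => pi (z i)); split=> //.
- by move=> i; apply: piJ.
- by move=> i; apply: piS.
- by rewrite -sum_xz rmorph_sum; apply: eq_bigr => i _; rewrite rmorphM.
move=> i _ /J_onto [q [Jq <-]]; have [w [Sw aq]] := Ja i q Jq.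
have zq : z i * q = w * p.
  apply: (regular_in_cancel sreg (SM (Sz i) (JS _ Jq)) (SM Sw (JS _ Jp))).
  by rewrite mulrA -(proj2 (Hz i)) mulrAC aq -mulrA.
by exists (pi w); split; [apply: piS | rewrite -!rmorphM zq mulrC].
Qed.

Theorem prufer_in_image r0 :
  regular_in S r0 -> pi r0 = 0 -> prufer_in S -> prufer_in S'.
Proof.
move=> r0reg pir0 SP I' I'ideal [g' I'g'] I'reg.
have [I'S _ _ _] := I'ideal.
have S'0 : S' 0 by rewrite -(rmorph0 pi); apply: piS; apply: subring_in0.
have S'1 : S' 1 by rewrite -(rmorph1 pi); apply: piS.
have [l [lS pil]] : exists l, (forall x, x \in l -> S x) /\ map pi l = g'.
  by apply: lift_seq => y /(span_in_mem S'0 S'1) g'y; apply/I'S/I'g'.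
have r0lS x : x \in r0 :: l -> S x by rewrite in_cons => /predU1P [->|/lS]; case: r0reg.
have r0l_image y : span_in S' (map pi (r0 :: l)) y <-> I' y.
  rewrite /= pir0 pil; split=> [/span_in_cons [a [z [_ g'z ->]]]|/I'g' g'y].
    by apply/I'g'; rewrite mulr0 add0r.
  by apply/span_in_cons; exists 0, y; rewrite mulr0 add0r.
apply: (invertible_in_image (J := span_in S (r0 :: l))).
- exact: ideal_in_span.
- by move=> q /span_in_map /r0l_image.
- by move=> y /r0l_image /span_in_lift.
- exact: I'reg.
apply: SP; first exact: ideal_in_span.
  by exists (r0 :: l).
by exists r0; split=> //; apply: (span_in_mem subring_in0 S1); rewrite mem_head.
Qed.

End Image.
End Subring.

Section Amalgamation.
Variables (A B : comPzRingType) (f : {rmorphism A -> B}) (b : B -> Prop).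
Hypothesis b_ideal : ideal_in (@full_pred B) b.

Lemma amalg1 : amalg f b 1.
Proof. by case: b_ideal; rewrite /amalg /= rmorph1 subrr. Qed.

Lemma amalgB x y : amalg f b x -> amalg f b y -> amalg f b (x - y).
Proof.
case: b_ideal => _ _ bD bM; rewrite /amalg /= rmorphB => bx b'y.
have -> : x.2 - y.2 - (f x.1 - f y.1) = (x.2 - f x.1) + - (y.2 - f y.1).
  by rewrite !opprB addrACA [RHS]addrACA [- y.2 + _]addrC.
by apply: bD => //; rewrite -mulN1r; apply: bM.
Qed.

Lemma amalgM x y : amalg f b x -> amalg f b y -> amalg f b (x * y).
Proof.
case: b_ideal => _ _ bD bM; rewrite /amalg /= rmorphM => bx b'y.
have -> : x.2 * y.2 - f x.1 * f y.1 = y.2 * (x.2 - f x.1) + f x.1 * (y.2 - f y.1).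
  by rewrite !mulrBr [y.2 * _]mulrC [y.2 * _]mulrC addrA subrK.
by apply: bD; apply: bM.
Qed.

End Amalgamation.

Theorem corollary4p5 (A B : comPzRingType) (f : {rmorphism A -> B})
  (b : B -> Prop) :
  ideal_in (@full_pred B) b ->
  prufer_in (amalg f b) ->
  (regular_ideal_in (amalg f b) (@zero_times A B b) -> prufer A) /\
  (regular_ideal_in (amalg f b) (preim_times_zero f b) ->
     prufer_in (img_plus f b)).
Proof.
move=> b_ideal amalgP.
have amalg_image := prufer_in_image (amalg1 f b_ideal) (amalgB b_ideal) (amalgM b_ideal).
split=> -[r0 [[? ?] r0reg]].
  apply: (amalg_image _ (@fst A B : {rmorphism _ -> _}) _ _ _ r0 r0reg) => // y _.
  by exists (y, f y); split=> //; rewrite /amalg /= subrr; case: b_ideal.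
apply: (amalg_image _ (@snd A B : {rmorphism _ -> _}) _ _ _ r0 r0reg) => //.
- by move=> p Sp; exists p.1.
by move=> y [a ba]; exists (a, y).
Qed.
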